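(* Let $R$ be a $*$-ring with unity such that $xa=ax^*$ for all $a,x\in R$. Then the natural partial order is compatible with multiplication: if $a\leq b$ then $ca\leq cb$ (and $ac\leq bc$) for all $c\in R$.
   Context: The natural partial order on a $*$-ring $R$ with unity: $a\leq b$ iff there is $x\in R$ with $a=xa=xb=ax^*=bx^*$. *)

From mathcomp Require Import all_boot all_algebra.
Set Implicit Arguments. Unset Strict Implicit. Unset Printing Implicit Defensive.
Import GRing.Theory.
Local Open Scope ring_scope.

Definition is_star_involution (R : pzRingType) (s : R -> R) : Prop :=
  [/\ forall x y : R, s (x + y) = s x + s y,
      forall x y : R, s (x * y) = s y * s x
    & forall x : R, s (s x) = x].

Definition star_le (R : pzRingType) (s : R -> R) (a b : R) : Prop :=
  exists x : R, [/\ a = x * a, a = x * b, a = a * s x & a = b * s x].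

(* Taking a = 1 in x a = a x^* shows x^* = x, so the hypothesis makes R
   commutative; and multiplying a <= b by a central element c, on either side,
   preserves the order with the same witness. *)
From mathcomp Require Import all_boot all_algebra.
Local Open Scope ring_scope.
Import GRing.Theory.

Section CentralMultiplication.

Variables (R : pzRingType) (s : R -> R) (c : R).
Hypothesis c_central : forall x : R, GRing.comm x c.

Lemma star_le_mull (a b : R) : star_le s a b -> star_le s (c * a) (c * b).
Proof.
case=> x [xa xb ax bx]; exists x; split.
- by rewrite mulrA c_central -mulrA -xa.
- by rewrite mulrA c_central -mulrA -xb.
- by rewrite -mulrA -ax.
- by rewrite -mulrA -bx.
Qed.

Lemma star_le_mulr (a b : R) : star_le s a b -> star_le s (a * c) (b * c).
Proof.
case=> x [xa xb ax bx]; exists x; split.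
- by rewrite mulrA -xa.
- by rewrite mulrA -xb.
- by rewrite -mulrA -c_central mulrA -ax.
- by rewrite -mulrA -c_central mulrA -bx.
Qed.

End CentralMultiplication.

Section SwapStar.

Variables (R : pzRingType) (s : R -> R).
Hypothesis swap_star : forall a x : R, x * a = a * s x.

Lemma swap_star_id (x : R) : s x = x.
Proof. by have := swap_star 1 x; rewrite mulr1 mul1r. Qed.

Lemma swap_star_comm (x y : R) : GRing.comm x y.
Proof. by rewrite /GRing.comm swap_star swap_star_id. Qed.

End SwapStar.

Theorem mainTheorem5 (R : pzRingType) (s : R -> R) :
  is_star_involution s ->
  (forall a x : R, x * a = a * s x) ->
  forall a b : R, star_le s a b ->
  forall c : R, star_le s (c * a) (c * b) /\ star_le s (a * c) (b * c).
Proof.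
move=> _ swap a b le_ab c.
have c_central (x : R) : GRing.comm x c by exact: swap_star_comm.
by split; [exact: star_le_mull | exact: star_le_mulr].
Qed.
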